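(* Let $u \in \mathbb{R}^m$, let $T$ be a finite set of vectors in $\mathbb{R}^m$, and let $S = \{v_1, \dots, v_k\}$ be a set of unit vectors in $\mathbb{R}^m$ with $f_u(S) \ge f_u(T)$ and $f_u(S) > 0$. Then $$\sum_{i=1}^k \big(f_u(T \cup \{v_i\}) - f_u(T)\big) \ge \sigma_{\min}(S)\, \frac{\big(f_u(S) - f_u(T)\big)^2}{4 f_u(S)}.$$
   Context: For a finite set $V$ of vectors in $\mathbb{R}^m$, $\Pi_V$ denotes the orthogonal projector onto $\mathrm{span}(V)$, and for $u \in \mathbb{R}^m$, $f_u(V) = \|\Pi_V u\|_2^2$. For a finite set $V$ of unit vectors, $\sigma_{\min}(V)$ is the smallest squared singular value of the matrix with columns $V$, i.e. $\inf_{\|x\|_2 = 1} \|Mx\|_2^2$ for that matrix $M$. *)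

From HB Require Import structures.
From mathcomp Require Import all_boot all_order all_algebra.
From mathcomp Require Import boolp classical_sets reals.
From Stdlib Require Import ClassicalEpsilon.
Set Implicit Arguments. Unset Strict Implicit. Unset Printing Implicit Defensive.
Import Order.TTheory GRing.Theory Num.Theory.
Local Open Scope ring_scope.

Definition dot (R : realType) (n : nat) (u v : 'rV[R]_n) : R :=
  \sum_(i < n) u 0 i * v 0 i.
Definition sqnorm (R : realType) (n : nat) (u : 'rV[R]_n) : R := dot u u.

Section Defs.
Variables (R : realType) (m : nat).

(* Matrix whose rows are the vectors of the finite family s; its row space
   is span(s). *)
Definition vecmx (s : seq 'rV[R]_m) : 'M[R]_(size s, m) :=
  \matrix_(i < size s) nth 0 s i.

Definition proj (V : seq 'rV[R]_m) (u : 'rV[R]_m) : 'rV[R]_m :=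
  epsilon (inhabits 0) (fun p : 'rV[R]_m =>
    (p <= vecmx V)%MS /\
    forall w : 'rV[R]_m, (w <= vecmx V)%MS -> dot (u - p) w = 0).

Definition f_ (u : 'rV[R]_m) (V : seq 'rV[R]_m) : R := sqnorm (proj V u).

(* sigma_min(V) = inf_{||x||=1} ||M x||^2, M the m x |V| matrix with columns V;
   with rows-representation, M x = x *m vecmx V. *)
Definition sigma_min (V : seq 'rV[R]_m) : R :=
  inf [set sqnorm (x *m vecmx V) | x in [set x : 'rV[R]_(size V) | sqnorm x = 1]].

End Defs.

(* Let r = u - Pi_T u be the residual of u off span(T) and z = Pi_S r.
   Adding v_i to T gains at least <r, v_i>^2, so the total gain is at least
   ||y||^2 where y = (<r, v_i>)_i.  Writing z = x M with M the matrix of rows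
   v_i, we have <y, x> = <r, z> = ||z||^2, and Cauchy-Schwarz together with
   sigma_min(S) ||x||^2 <= ||z||^2 gives ||y||^2 >= sigma_min(S) ||z||^2.
   Finally <z, Pi_S u> = f_u(S) - <Pi_T u, Pi_S u> >= f_u(S) - sqrt(f_u(T) f_u(S)),
   and Cauchy-Schwarz once more bounds ||z||^2 below by
   (f_u(S) - f_u(T))^2 / (4 f_u(S)). *)
From HB Require Import structures.
From mathcomp Require Import all_boot all_order all_algebra.
From mathcomp Require Import boolp classical_sets reals.
From mathcomp Require Import ring lra zify.
From Stdlib Require Import ClassicalEpsilon.
Set Implicit Arguments. Unset Strict Implicit. Unset Printing Implicit Defensive.
Import Order.TTheory GRing.Theory Num.Theory.
Local Open Scope ring_scope.

Section Dot.
Variables (R : realType) (n : nat).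
Implicit Types (a b c : 'rV[R]_n).

Lemma dotE a b : dot a b = (a *m b^T) 0 0.
Proof. by rewrite /dot mxE; apply: eq_bigr => i _; rewrite mxE. Qed.

Lemma dotC a b : dot a b = dot b a.
Proof. by rewrite /dot; apply: eq_bigr => i _; rewrite mulrC. Qed.

Lemma dot0l a : dot 0 a = 0.
Proof. by rewrite dotE mul0mx mxE. Qed.

Lemma dotBl a b c : dot (a - b) c = dot a c - dot b c.
Proof. by rewrite !dotE mulmxBl !mxE. Qed.

Lemma dotZl k a c : dot (k *: a) c = k * dot a c.
Proof. by rewrite !dotE -scalemxAl mxE. Qed.

Lemma dotBr a b c : dot c (a - b) = dot c a - dot c b.
Proof. by rewrite dotC dotBl !(dotC c). Qed.

Lemma dotZr k a c : dot c (k *: a) = k * dot c a.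
Proof. by rewrite dotC dotZl dotC. Qed.

Lemma sqnorm_ge0 a : 0 <= sqnorm a.
Proof. by rewrite /sqnorm /dot sumr_ge0 // => i _; rewrite -expr2 sqr_ge0. Qed.

Lemma sqnorm_eq0 a : sqnorm a = 0 -> a = 0.
Proof.
rewrite /sqnorm /dot => /eqP; rewrite psumr_eq0 => [/allP a0|i _]; last first.
  by rewrite -expr2 sqr_ge0.
apply/rowP => i; rewrite mxE; have := a0 i (mem_index_enum _).
by rewrite /= -expr2 sqrf_eq0 => /eqP.
Qed.

Lemma sqnormZ k a : sqnorm (k *: a) = k ^+ 2 * sqnorm a.
Proof. by rewrite /sqnorm dotZl dotZr mulrA expr2. Qed.

Lemma dot_sqr_le a b : dot a b ^+ 2 <= sqnorm a * sqnorm b.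
Proof.
have [b0|bn0] := eqVneq (sqnorm b) 0.
  by rewrite b0 mulr0 (sqnorm_eq0 b0) dotC dot0l expr0n.
have bp : 0 < sqnorm b by rewrite lt0r bn0 sqnorm_ge0.
have := sqnorm_ge0 (sqnorm b *: a - dot a b *: b).
rewrite /sqnorm !(dotBl, dotBr, dotZl, dotZr) (dotC b a).
set x := dot b b; set y := dot a a; set z := dot a b => sq_ge0.
have : 0 <= x * (x * y - z ^+ 2) by nra.
by rewrite pmulr_rge0 // subr_ge0 mulrC.
Qed.

End Dot.

Lemma sqnorm_row (R : realType) k n (B : 'M[R]_(k, n)) i :
  sqnorm (row i B) = (B *m B^T) i i.
Proof. by rewrite /sqnorm /dot !mxE; apply: eq_bigr => j _; rewrite !mxE. Qed.

Lemma trmx_sub_gram (R : realType) k n (A : 'M[R]_(k, n)) : (A^T <= A *m A^T)%MS.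
Proof.
set G := A *m A^T.
have kerGA : kermx G *m A = 0.
  set B := kermx G *m A.
  have BBt : B *m B^T = 0.
    by rewrite trmx_mul mulmxA -(mulmxA _ A) -/G mulmx_ker mul0mx.
  apply/row_matrixP => i; rewrite row0; apply: sqnorm_eq0.
  by rewrite sqnorm_row BBt mxE.
have := mxrankS (introT sub_kermxP kerGA); rewrite !mxrank_ker => rk.
have rankA_le : (\rank A^T <= \rank G)%N.
  by rewrite mxrank_tr; move: rk (rank_leq_row A) (rank_leq_row G); lia.
by rewrite -(mxrank_leqif_sup (submxMl A A^T)).2 -/G eqn_leq rankA_le mxrankS ?submxMl.
Qed.

Section Projection.
Variables (R : realType) (m : nat).
Implicit Types (u v w : 'rV[R]_m) (V : seq 'rV[R]_m).

Lemma orthogonal_proj_exists k (A : 'M[R]_(k, m)) u :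
  exists p, (p <= A)%MS /\ forall w, (w <= A)%MS -> dot (u - p) w = 0.
Proof.
set G := A *m A^T.
have uAt_sub : (u *m A^T <= G)%MS.
  exact: submx_trans (submxMl _ _) (trmx_sub_gram A).
set x := u *m A^T *m pinvmx G.
have xG : x *m G = u *m A^T by rewrite mulmxKpV.
exists (x *m A); split; first exact: submxMl.
move=> w /submxP [D ->]; rewrite dotE trmx_mul mulmxA mulmxBl -mulmxA -/G xG.
by rewrite subrr mul0mx mxE.
Qed.

Lemma proj_spec V u : (proj V u <= vecmx V)%MS /\
  forall w, (w <= vecmx V)%MS -> dot (u - proj V u) w = 0.
Proof.
exact: (epsilon_spec (inhabits 0) _ (orthogonal_proj_exists (vecmx V) u)).
Qed.

Lemma proj_sub V u : (proj V u <= vecmx V)%MS.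
Proof. by case: (proj_spec V u). Qed.

Lemma dot_proj V u w : (w <= vecmx V)%MS -> dot (proj V u) w = dot u w.
Proof.
by case: (proj_spec V u) => _ /[apply] /eqP; rewrite dotBl subr_eq0 => /eqP.
Qed.

Lemma vecmx_cons_sub v V : (vecmx V <= vecmx (v :: V))%MS.
Proof.
apply/row_subP => i; rewrite rowK.
have -> : nth 0 V i = row (lift ord0 i) (vecmx (v :: V)) by rewrite rowK.
exact: row_sub.
Qed.

Lemma vecmx_cons_head v V : (v <= vecmx (v :: V))%MS.
Proof. by move: (row_sub ord0 (vecmx (v :: V))); rewrite rowK. Qed.

(* Pythagoras: f_u(v :: T) - f_u(T) is the squared norm of the new component
   Pi_{v::T} u - Pi_T u, whose inner product with v is <u - Pi_T u, v>. *)
Lemma f_cons_gain_ge v V u : sqnorm v = 1 ->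
  dot (u - proj V u) v ^+ 2 <= f_ u (v :: V) - f_ u V.
Proof.
move=> v1; rewrite /f_ /sqnorm.
set q := proj (v :: V) u; set p := proj V u.
have pS : (p <= vecmx (v :: V))%MS := submx_trans (proj_sub V u) (vecmx_cons_sub v V).
have qp : dot q p = dot p p by rewrite dot_proj // -(dot_proj (V := V)) // proj_sub.
have qv : dot q v = dot u v by rewrite dot_proj // vecmx_cons_head.
have gain_dot : dot (q - p) v = dot (u - p) v by rewrite !dotBl qv.
have gain_norm : dot (q - p) (q - p) = dot q q - dot p p.
  rewrite !(dotBl, dotBr) qp (dotC p q) qp; ring.
by have := dot_sqr_le (q - p) v; rewrite v1 mulr1 /sqnorm gain_dot gain_norm.
Qed.

Lemma sigma_min_ge0 V : 0 <= sigma_min V.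
Proof.
rewrite /sigma_min; set E := (X in inf X).
have [[y Ey]|E0] := pselect (exists y, E y).
  by apply: lb_le_inf; [exists y | move=> z [x _ <-]; apply: sqnorm_ge0].
have -> : E = set0 by apply/seteqP; split => z //= Ez; apply: E0; exists z.
by rewrite inf0.
Qed.

Lemma sigma_min_sqnorm_le V (x : 'rV[R]_(size V)) :
  sigma_min V * sqnorm x <= sqnorm (x *m vecmx V).
Proof.
have [x0|xn0] := eqVneq (sqnorm x) 0; first by rewrite x0 mulr0 sqnorm_ge0.
have xp : 0 < sqnorm x by rewrite lt0r xn0 sqnorm_ge0.
set s := Num.sqrt (sqnorm x).
have s2 : s ^+ 2 = sqnorm x by rewrite sqr_sqrtr // ltW.
have s2_neq0 : s ^+ 2 != 0 by rewrite s2 gt_eqF.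
have lb : has_lbound [set sqnorm (y *m vecmx V) | y in
            [set y : 'rV[R]_(size V) | sqnorm y = 1]].
  by exists 0 => y [z _ <-]; apply: sqnorm_ge0.
have unit_bound : sigma_min V <= sqnorm ((s^-1 *: x) *m vecmx V).
  by apply: (ge_inf lb); exists (s^-1 *: x); rewrite //= sqnormZ -s2 exprVn mulVf.
rewrite -scalemxAl sqnormZ in unit_bound.
apply: (le_trans (ler_wpM2r (sqnorm_ge0 x) unit_bound)).
by rewrite -s2 exprVn mulrAC mulVf ?mul1r.
Qed.

Lemma sqnorm_mul_trmx_vecmx V r :
  sqnorm (r *m (vecmx V)^T) = \sum_(v <- V) dot r v ^+ 2.
Proof.
rewrite (big_nth 0) big_mkord /sqnorm /dot; apply: eq_bigr => i _.
by rewrite -expr2 mxE; congr (_ ^+ 2); apply: eq_bigr => j _; rewrite !mxE.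
Qed.

Lemma sigma_min_sqnorm_proj_le V r :
  sigma_min V * sqnorm (proj V r) <= \sum_(v <- V) dot r v ^+ 2.
Proof.
set z := proj V r; case/submxP: (proj_sub V r) => x zx.
set y := r *m (vecmx V)^T; rewrite -sqnorm_mul_trmx_vecmx -/y.
have yx : dot y x = sqnorm z.
  by rewrite /sqnorm {1}/z dot_proj ?proj_sub // !dotE /y /z zx trmx_mul mulmxA.
have cs := dot_sqr_le y x; rewrite yx in cs.
have sx := sigma_min_sqnorm_le x; rewrite -zx in sx.
have [x0|xn0] := eqVneq (sqnorm x) 0.
  have -> : sqnorm z = 0.
    by apply/eqP; rewrite -sqrf_eq0 eq_le sqr_ge0 andbT -(mulr0 (sqnorm y)) -x0.
  by rewrite mulr0 sqnorm_ge0.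
have xp : 0 < sqnorm x by rewrite lt0r xn0 sqnorm_ge0.
rewrite -(ler_pM2r xp); apply: le_trans cs.
by rewrite mulrAC expr2 ler_wpM2r ?sqnorm_ge0.
Qed.

End Projection.

Lemma sqr_gap_div_le (R : realFieldType) (a b c d : R) :
  0 <= b -> b <= a -> 0 < a -> d ^+ 2 <= b * a -> (a - d) ^+ 2 <= c * a ->
  (a - b) ^+ 2 / (4 * a) <= c.
Proof.
move=> b0 ba a0 db adc; rewrite ler_pdivrMr ?mulr_gt0 //.
have gap_le : a - b <= 2 * (a - d) by nra.
have gap_ge0 : 0 <= a - b by lra.
have sqr_gap_le : (a - b) ^+ 2 <= 4 * (a - d) ^+ 2 by nra.
nra.
Qed.

Lemma sqnorm_proj_residual_ge (R : realType) m (u : 'rV[R]_m) (T S : seq 'rV[R]_m) :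
  f_ u T <= f_ u S -> 0 < f_ u S ->
  (f_ u S - f_ u T) ^+ 2 / (4 * f_ u S) <= sqnorm (proj S (u - proj T u)).
Proof.
move=> fTS fS_gt0; set pT := proj T u; set pS := proj S u.
apply: (sqr_gap_div_le (d := dot pT pS)) => //; first exact: sqnorm_ge0.
  exact: dot_sqr_le.
have <- : dot (proj S (u - pT)) pS = f_ u S - dot pT pS.
  by rewrite dot_proj ?proj_sub // dotBl -(dot_proj _ (proj_sub S u)).
exact: dot_sqr_le.
Qed.

Theorem lemma2 (R : realType) (m : nat) (u : 'rV[R]_m)
    (T : seq 'rV[R]_m) (S : seq 'rV[R]_m) :
  uniq S ->
  (forall v, v \in S -> sqnorm v = 1) ->
  f_ u T <= f_ u S ->
  0 < f_ u S ->
  \sum_(v <- S) (f_ u (v :: T) - f_ u T) >=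
    sigma_min S * ((f_ u S - f_ u T) ^+ 2 / (4 * f_ u S)).
Proof.
move=> _ unitS fTS fS_gt0; set r := u - proj T u.
have gain_ge : \sum_(v <- S) dot r v ^+ 2 <= \sum_(v <- S) (f_ u (v :: T) - f_ u T).
  rewrite big_seq_cond [leRHS]big_seq_cond.
  by apply: ler_sum => v /andP[/unitS v1 _]; exact: f_cons_gain_ge.
apply: le_trans gain_ge; apply: le_trans (sigma_min_sqnorm_proj_le S r).
by rewrite ler_wpM2l ?sigma_min_ge0 ?sqnorm_proj_residual_ge.
Qed.
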